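(* Let $C\ge 1$ and $D\ge 0$ be integers and let $L=\{1,\dots,C\}$ be a set of labels. Let $(p_s)_{s=1}^C$ be a probability distribution on $L$ with all $p_s>0$. For each $s\in L$ let $q_s$ be a probability distribution on $\{0,1,\dots,D\}$. Let $c_{sr}\ge 0$ ($s,r\in L$) be given with $\sum_{k=1}^C p_k c_{sk}>0$ for every $s$, and set $$z_{sr}=\frac{p_r c_{sr}}{\sum_{k=1}^C p_k c_{sk}}\qquad (s,r\in L),$$ so that each $(z_{s1},\dots,z_{sC})$ is a probability vector. Consider the random pair $(\ell,\mathcal{M})$ generated as follows: $\ell\in L$ has $P(\ell=s)=p_s$; conditionally on $\ell=s$, a degree $d\in\{0,\dots,D\}$ is drawn with probability $q_s(d)$, and then $d$ neighbor labels are drawn independently, each equal to $r$ with probability $z_{sr}$; $\mathcal{M}$ is the resulting unordered multiset of neighbor labels, equivalently the count vector $(n_1,\dots,n_C)$ with $n_k$ the number of neighbor labels equal to $k$ (so $\sum_k n_k=d$). Thus $$P(\mathcal{M}=(n_1,\dots,n_C)\mid \ell=s)=q_s(d)\,\frac{d!}{\prod_{k=1}^C n_k!}\prod_{k=1}^C z_{sk}^{n_k},\qquad d=\textstyle\sum_k n_k.$$ (This is the model of a labelled random graph in which a node with label $r$ connects to a node with label $s$ with probability $c_{sr}$, nodes with label $s$ have degree distribution $q_s$, and the number of nodes is much larger than the maximum degree $D$, so that neighbor labels of a node with label $s$ are i.i.d. with law $z_{s\cdot}$.) Then the mutual information (in nats) between $\ell$ and $\mathcal{M}$ satisfies $$MI(\ell;\mathcal{M})\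 \ge\ NIC:=-\sum_{s=1}^C p_s\ln\!\left(\sum_{r=1}^C p_r\sum_{d=0}^{D}\sqrt{q_s(d)q_r(d)}\Big(\sum_{k=1}^C\sqrt{z_{sk}z_{rk}}\Big)^{d}\right).$$
   Context: $MI(X;Y)=H(Y)-H(Y\mid X)$ with natural logarithms. The quantity $NIC$ is called the Neighborhood Information Content; $p_s$ is the probability a node has label $s$, $c_{sr}$ the probability a node of label $r$ connects to a node of label $s$, $q_s$ the degree distribution of nodes with label $s$, and $z_{sr}$ equals the probability that a neighbor of a label-$s$ node has label $r$. *)

From HB Require Import structures.
From mathcomp Require Import all_boot all_order all_algebra.
From mathcomp Require Import all_classical all_reals all_analysis.
Set Implicit Arguments. Unset Strict Implicit. Unset Printing Implicit Defensive.
Import Order.TTheory GRing.Theory Num.Theory.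
Local Open Scope ring_scope.

Section Defs.
Variable R : realType.

Definition xlnx (x : R) : R := if x == 0 then 0 else x * ln x.

Definition zprob (C : nat) (p : 'I_C -> R) (c : 'I_C -> 'I_C -> R)
  (s r : 'I_C) : R := p r * c s r / \sum_(k < C) p k * c s k.

(* Neighbour count vectors (n_1,...,n_C) with total degree d = sum n_k <= D. *)
Definition degree (C D : nat) (n : {ffun 'I_C -> 'I_D.+1}) : nat :=
  \sum_(k < C) (n k : nat).

Definition countvec (C D : nat) : pred {ffun 'I_C -> 'I_D.+1} :=
  fun n => (degree n <= D)%N.

Definition condP (C D : nat) (q : 'I_C -> 'I_D.+1 -> R) (z : 'I_C -> 'I_C -> R)
  (s : 'I_C) (n : {ffun 'I_C -> 'I_D.+1}) : R :=
  q s (inord (degree n)) * ((degree n)`!)%:R / (\prod_(k < C) (n k)`!)%:R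
  * \prod_(k < C) z s k ^+ (n k).

Definition margP (C D : nat) (p : 'I_C -> R) (q : 'I_C -> 'I_D.+1 -> R)
  (z : 'I_C -> 'I_C -> R) (n : {ffun 'I_C -> 'I_D.+1}) : R :=
  \sum_(s < C) p s * condP q z s n.

Definition entropyM (C D : nat) (p : 'I_C -> R) (q : 'I_C -> 'I_D.+1 -> R)
  (z : 'I_C -> 'I_C -> R) : R :=
  - \sum_(n in @countvec C D) xlnx (margP p q z n).

Definition condEntropyM (C D : nat) (p : 'I_C -> R) (q : 'I_C -> 'I_D.+1 -> R)
  (z : 'I_C -> 'I_C -> R) : R :=
  \sum_(s < C) p s * (- \sum_(n in @countvec C D) xlnx (condP q z s n)).

Definition MI (C D : nat) (p : 'I_C -> R) (q : 'I_C -> 'I_D.+1 -> R)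
  (z : 'I_C -> 'I_C -> R) : R := entropyM p q z - condEntropyM p q z.

Definition NIC (C D : nat) (p : 'I_C -> R) (q : 'I_C -> 'I_D.+1 -> R)
  (z : 'I_C -> 'I_C -> R) : R :=
  - \sum_(s < C) p s * ln (\sum_(r < C) p r *
      \sum_(d < D.+1) Num.sqrt (q s d * q r d) *
        (\sum_(k < C) Num.sqrt (z s k * z r k)) ^+ d).
End Defs.

From HB Require Import structures.
From mathcomp Require Import all_boot all_order all_algebra.
From mathcomp Require Import all_classical all_reals all_analysis.
From mathcomp Require Import ring lra.
Import Order.TTheory GRing.Theory Num.Theory.
Local Open Scope ring_scope.

(* The proof has an abstract core and a combinatorial part.
   - Abstract core: for a finite mixture sum_s p_s P_s of distributions, the
     mutual information H(sum_s p_s P_s) - sum_s p_s H(P_s) is at least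
     - sum_s p_s ln (sum_r p_r BC(P_s, P_r)), BC being the Bhattacharyya
     coefficient sum_n sqrt (P_s(n) P_r(n)).  Writing a(n) = sum_s p_s sqrt P_s(n),
     this follows from two instances of the log-sum inequality
     (itself a consequence of ln u <= u - 1): one over the outcomes n for each
     component s, and one over the labels s for each outcome n.
   - Combinatorial part: for the neighbourhood law
     P_s(n) = q_s(d) d!/prod n_k! prod z_sk^n_k, the square root of
     P_s(n) P_r(n) has the same multinomial shape, and the truncated multinomial
     theorem (proved through products of truncated exponential polynomials)
     turns BC(P_s, P_r) into sum_d sqrt (q_s(d) q_r(d)) (sum_k sqrt (z_sk z_rk))^d
     and shows that each P_s is a probability distribution. *)

Section LogSum.
Variable R : realType.

(* The convention 0 ln 0 = 0 is built into ln, since ln 0 = 0. *)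
Lemma xlnxE (x : R) : xlnx x = x * ln x.
Proof. by rewrite /xlnx; case: eqP => [->|]; rewrite ?mul0r. Qed.

(* Holds for all x, both sides vanishing when x <= 0. *)
Lemma ln_sqrtr (x : R) : ln (Num.sqrt x) = ln x / 2.
Proof.
have [x_le0|x_gt0] := leP x 0.
  by rewrite !ln0 ?mul0r // (eqP (_ : Num.sqrt x == 0)) ?sqrtr_eq0.
by rewrite -{2}(sqr_sqrtr (ltW x_gt0)) lnXn ?sqrtr_gt0 // mulr2n; field.
Qed.

Lemma ln_le_subr1 (u : R) : 0 < u -> ln u <= u - 1.
Proof. by move=> u_gt0; rewrite -[u in ln u](subrK 1) addrC le_ln1Dx // ltrBrDl subrr. Qed.

Lemma ln_cancel_common (c u v : R) : 0 < c -> 0 < u -> 0 < v ->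
  ln (c * u) - ln (c * v) = ln u - ln v.
Proof. by move=> c_gt0 u_gt0 v_gt0; rewrite !lnM ?posrE //; ring. Qed.

(* One term of the log-sum inequality: ln u <= u - 1 at u = b A / (a B). *)
Lemma log_sum_term (a b A B : R) : 0 < a -> 0 < b -> 0 < A -> 0 < B ->
  a * (ln A - ln B) - a * (ln a - ln b) <= b * (A / B) - a.
Proof.
move=> a_gt0 b_gt0 A_gt0 B_gt0.
have u_gt0 : 0 < (b * A) / (a * B) by rewrite divr_gt0 ?mulr_gt0.
have := @ln_le_subr1 _ u_gt0.
rewrite ln_div ?lnM ?posrE ?mulr_gt0 // => le_ln.
have -> : b * (A / B) - a = a * ((b * A) / (a * B) - 1).
  by field; rewrite !gt_eqF.
by rewrite -mulrBr; apply: ler_wpM2l; [exact: ltW | lra].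
Qed.

Lemma log_sum_inequality (I : finType) (P : pred I) (a b : I -> R) :
  (forall i, 0 <= a i) -> (forall i, 0 <= b i) -> (forall i, 0 < a i -> 0 < b i) ->
  (\sum_(i | P i) a i) * (ln (\sum_(i | P i) a i) - ln (\sum_(i | P i) b i))
  <= \sum_(i | P i) a i * (ln (a i) - ln (b i)).
Proof.
move=> a_ge0 b_ge0 ab_gt0.
set A := \sum_(i | P i) a i; set B := \sum_(i | P i) b i.
have A_ge0 : 0 <= A by rewrite sumr_ge0.
have B_ge0 : 0 <= B by rewrite sumr_ge0.
have term i : P i -> a i * (ln A - ln B) - a i * (ln (a i) - ln (b i))
                     <= b i * (A / B) - a i.
  move=> Pi; have [->|ai_gt0] := eqVneq (a i) 0.
    by rewrite !mul0r subr0 subr0 mulr_ge0 ?divr_ge0.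
  have {}ai_gt0 : 0 < a i by rewrite lt0r ai_gt0 a_ge0.
  have le_sum (f : I -> R) : (forall j, 0 <= f j) -> f i <= \sum_(j | P j) f j.
    by move=> f_ge0; rewrite (bigD1 i) //= lerDl sumr_ge0.
  apply: log_sum_term => //; first exact: ab_gt0.
    exact: lt_le_trans ai_gt0 (le_sum _ a_ge0).
  exact: lt_le_trans (ab_gt0 _ ai_gt0) (le_sum _ b_ge0).
have := ler_sum (index_enum I) term; rewrite !sumrB -!mulr_suml -/A -/B.
have : B * (A / B) <= A.
  by have [->|B_neq0] := eqVneq B 0; rewrite ?mul0r // mulrC divfK.
lra.
Qed.

End LogSum.

Section Mixture.
Variables (R : realType) (T : finType) (A : pred T) (C : nat).
Variables (p : 'I_C -> R) (P : 'I_C -> T -> R).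
Hypothesis p_gt0 : forall s, 0 < p s.
Hypothesis P_ge0 : forall s n, 0 <= P s n.
Hypothesis P_sum1 : forall s, \sum_(n in A) P s n = 1.

Definition bhattacharyya (f g : T -> R) : R := \sum_(n in A) Num.sqrt (f n * g n).

Let mix (n : T) : R := \sum_s p s * P s n.
Let root_mix (n : T) : R := \sum_s p s * Num.sqrt (P s n).

Lemma root_mix_ge (s : 'I_C) (n : T) : p s * Num.sqrt (P s n) <= root_mix n.
Proof.
rewrite /root_mix (bigD1 s) //= lerDl sumr_ge0 // => r _.
by rewrite mulr_ge0 ?sqrtr_ge0 // ltW.
Qed.

(* Log-sum over the outcomes n, with a_n = P_s(n) and b_n = sqrt P_s(n) root_mix(n),
   whose total is the mean affinity sum_r p_r BC(P_s, P_r). *)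
Lemma component_bound (s : 'I_C) :
  - ln (\sum_r p r * bhattacharyya (P s) (P r))
  <= \sum_(n in A) P s n * (ln (Num.sqrt (P s n)) - ln (root_mix n)).
Proof.
pose x n := Num.sqrt (P s n).
have sqr_x n : x n ^+ 2 = P s n by rewrite sqr_sqrtr.
have affinityE : \sum_r p r * bhattacharyya (P s) (P r)
                 = \sum_(n in A) x n * root_mix n.
  under eq_bigr => r _ do rewrite /bhattacharyya mulr_sumr.
  rewrite exchange_big; apply: eq_bigr => n _.
  rewrite /root_mix mulr_sumr; apply: eq_bigr => r _.
  by rewrite sqrtrM // -/(x n); ring.
have root_mix_gt0 n : 0 < x n -> 0 < root_mix n.
  by move=> x_gt0; apply: lt_le_trans (root_mix_ge s n); rewrite mulr_gt0.
have x_ge0 n : 0 <= x n by exact: sqrtr_ge0.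
have root_mix_ge0 n : 0 <= root_mix n.
  exact: le_trans (mulr_ge0 (ltW (p_gt0 s)) (x_ge0 n)) (root_mix_ge s n).
have sum_x : \sum_(n in A) x n ^+ 2 = 1 by under eq_bigr do rewrite sqr_x.
rewrite [leRHS](eq_bigr (fun n => x n ^+ 2 * (ln (x n ^+ 2) - ln (x n * root_mix n)))).
  have := @log_sum_inequality R T (fun n => n \in A) (fun n => x n ^+ 2)
    (fun n => x n * root_mix n) (fun n => sqr_ge0 _).
  rewrite -affinityE sum_x ln1 mul1r sub0r; apply.
  - by move=> n; rewrite mulr_ge0 ?root_mix_ge0.
  - move=> n; rewrite exprn_even_gt0 //= => x_neq0.
    have x_gt0 : 0 < x n by rewrite lt0r x_neq0 x_ge0.
    by rewrite mulr_gt0 ?root_mix_gt0.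
move=> n _; rewrite -/(x n) -sqr_x.
have [->|x_neq0] := eqVneq (x n) 0; first by rewrite expr0n !mul0r.
have x_gt0 : 0 < x n by rewrite lt0r x_neq0 x_ge0.
by congr (_ * _); rewrite expr2 ln_cancel_common ?root_mix_gt0.
Qed.

(* Log-sum over the labels s, with a_s = p_s P_s(n) and b_s = p_s sqrt P_s(n);
   equivalently, convexity of t ln t at the point mix(n) / root_mix(n). *)
Lemma pointwise_bound (n : T) :
  mix n * (ln (mix n) - ln (root_mix n))
  <= \sum_s p s * P s n * ln (Num.sqrt (P s n)).
Proof.
pose x s := Num.sqrt (P s n).
have sqr_x s : x s ^+ 2 = P s n by rewrite sqr_sqrtr.
have x_ge0 s : 0 <= x s by exact: sqrtr_ge0.
have mixE : mix n = \sum_s p s * x s ^+ 2 by apply: eq_bigr => s _; rewrite sqr_x.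
rewrite [leRHS](eq_bigr (fun s => p s * x s ^+ 2 * (ln (p s * x s ^+ 2) - ln (p s * x s)))).
  rewrite mixE; apply: (@log_sum_inequality R _ predT) => s.
  - exact: mulr_ge0 (ltW (p_gt0 s)) (sqr_ge0 _).
  - exact: mulr_ge0 (ltW (p_gt0 s)) (x_ge0 s).
  - rewrite pmulr_rgt0 // exprn_even_gt0 //= => x_neq0.
    by rewrite mulr_gt0 // lt0r x_neq0 x_ge0.
move=> s _; rewrite -/(x s) -sqr_x.
have [->|x_neq0] := eqVneq (x s) 0; first by rewrite expr0n !mulr0 !mul0r.
have x_gt0 : 0 < x s by rewrite lt0r x_neq0 x_ge0.
rewrite -[in ln (p s * x s)](mulr1 (p s * x s)) expr2 mulrA.
by rewrite ln_cancel_common ?mulr_gt0 // ln1 subr0.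
Qed.

Lemma mixture_information_ge :
  - \sum_s p s * ln (\sum_r p r * bhattacharyya (P s) (P r))
  <= - \sum_(n in A) xlnx (mix n) - \sum_s p s * (- \sum_(n in A) xlnx (P s n)).
Proof.
pose L n := \sum_s p s * P s n * ln (Num.sqrt (P s n)).
have components : - \sum_s p s * ln (\sum_r p r * bhattacharyya (P s) (P r))
    <= \sum_s p s * \sum_(n in A) P s n * (ln (Num.sqrt (P s n)) - ln (root_mix n)).
  rewrite -sumrN; apply: ler_sum => s _; rewrite -mulrN.
  by apply: ler_wpM2l; [exact: ltW | exact: component_bound].
have componentsE :
    \sum_s p s * \sum_(n in A) P s n * (ln (Num.sqrt (P s n)) - ln (root_mix n))
    = \sum_(n in A) (L n - mix n * ln (root_mix n)).
  under eq_bigr => s _ do rewrite mulr_sumr.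
  rewrite exchange_big; apply: eq_bigr => n _.
  by rewrite /L /mix mulr_suml -sumrB; apply: eq_bigr => s _; ring.
have conditionalE :
    \sum_s p s * (- \sum_(n in A) xlnx (P s n)) = - (2 * \sum_(n in A) L n).
  rewrite /L exchange_big mulr_sumr -sumrN; apply: eq_bigr => s _.
  rewrite mulrN mulr_sumr mulr_sumr; congr (- _); apply: eq_bigr => n _.
  by rewrite xlnxE ln_sqrtr; field.
have pointwise : \sum_(n in A) (xlnx (mix n) - mix n * ln (root_mix n))
    <= \sum_(n in A) L n.
  by apply: ler_sum => n _; rewrite xlnxE -mulrBr; exact: pointwise_bound.
move: components pointwise; rewrite componentsE conditionalE !sumrB; lra.
Qed.

End Mixture.

Arguments bhattacharyya {R T} A f g.

Section TruncatedMultinomial.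
Variables (R : numFieldType) (D : nat).

Lemma natr_fact_neq0 (n : nat) : (n`!)%:R != 0 :> R.
Proof. by rewrite pnatr_eq0 -lt0n fact_gt0. Qed.

Definition trunc_exp (y : R) : {poly R} :=
  \sum_(j < D.+1) (y ^+ j / (j`!)%:R) *: 'X^j.

Lemma coef_trunc_exp (y : R) (j : nat) : (j <= D)%N ->
  (trunc_exp y)`_j = y ^+ j / (j`!)%:R.
Proof.
move=> le_jD; rewrite /trunc_exp coef_sum.
under eq_bigr => i _ do rewrite coefZ coefXn.
rewrite (bigD1 (Ordinal (le_jD : (j < D.+1)%N))) //= eqxx mulr1 big1 ?addr0 //.
move=> i /negbTE i_neq_j; rewrite (_ : (j == i) = false) ?mulr0 //.
by apply/negbTE; apply: contraFneq i_neq_j => j_eq_i; apply/eqP/val_inj.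
Qed.

(* Multinomial theorem below degree D, in generating-function form:
   exp(y_1 X) ... exp(y_C X) = exp((y_1 + ... + y_C) X) up to X^D. *)
Lemma coef_prod_trunc_exp (C : nat) (y : 'I_C -> R) (d : nat) : (d <= D)%N ->
  (\prod_(k < C) trunc_exp (y k))`_d = (\sum_(k < C) y k) ^+ d / (d`!)%:R.
Proof.
elim: C y d => [|C IH] y d le_dD.
  rewrite !big_ord0 coef1; case: d le_dD => [|d] _; first by rewrite fact0 divr1.
  by rewrite expr0n /= mul0r.
rewrite big_ord_recl coefM [in RHS]big_ord_recl (addrC (y ord0)) exprDn mulr_suml.
apply: eq_bigr => i _; have le_id : (i <= d)%N by rewrite -ltnS.
rewrite coef_trunc_exp ?(leq_trans le_id) // IH ?(leq_trans (leq_subr _ _)) //.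
rewrite -(bin_fact le_id) !natrM mulr_natr -mulr_natl.
have bin_neq0 : ('C(d, i))%:R != 0 :> R by rewrite pnatr_eq0 -lt0n bin_gt0.
by field; rewrite bin_neq0 !natr_fact_neq0.
Qed.

Lemma sum_degree_eq (C : nat) (y : 'I_C -> R) (d : nat) : (d <= D)%N ->
  \sum_(n : {ffun 'I_C -> 'I_D.+1} | degree n == d)
     \prod_(k < C) (y k ^+ n k / ((n k)`!)%:R)
  = (\sum_(k < C) y k) ^+ d / (d`!)%:R.
Proof.
move=> le_dD; rewrite -coef_prod_trunc_exp // /trunc_exp bigA_distr_bigA /=.
rewrite coef_sum big_mkcond; apply: eq_bigr => n _.
under [in RHS]eq_bigr => k _ do rewrite -mul_polyC.
rewrite [in RHS]big_split /= -(rmorph_prod (@polyC R)) prodrXr mul_polyC coefZ coefXn.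
by rewrite /degree eq_sym; case: eqP; rewrite ?mulr1 ?mulr0.
Qed.

Lemma multinomial_sum (C : nat) (w : 'I_D.+1 -> R) (y : 'I_C -> R) :
  \sum_(n in @countvec C D) w (inord (degree n)) * ((degree n)`!)%:R
     / (\prod_(k < C) (n k)`!)%:R * \prod_(k < C) y k ^+ (n k)
  = \sum_(d < D.+1) w d * (\sum_(k < C) y k) ^+ d.
Proof.
set G := fun n : {ffun 'I_C -> 'I_D.+1} => w (inord (degree n)) * ((degree n)`!)%:R
     / (\prod_(k < C) (n k)`!)%:R * \prod_(k < C) y k ^+ (n k).
transitivity (\sum_(d < D.+1) \sum_(n | degree n == d) G n).
  under [RHS]eq_bigr do rewrite big_mkcond.
  rewrite [RHS]exchange_big /= [LHS]big_mkcond; apply: eq_bigr => n _.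
  rewrite -big_mkcond (eq_bigl (fun d : 'I_D.+1 => d == degree n :> nat)).
    by rewrite (big_ord1_eq _ (fun _ => G n)) unfold_in /countvec ltnS.
  by move=> d; rewrite eq_sym.
apply: eq_bigr => d _.
rewrite (eq_bigr (fun n : {ffun 'I_C -> 'I_D.+1} =>
  w d * (d`!)%:R * \prod_k (y k ^+ n k / ((n k)`!)%:R))).
  rewrite -mulr_sumr sum_degree_eq; last by rewrite -ltnS.
  by rewrite -!mulrA; congr (_ * _); rewrite mulrC divfK ?natr_fact_neq0.
move=> n /eqP deg_n.
by rewrite /G deg_n inord_val prodf_div natr_prod [RHS]mulrA [LHS]mulrAC.
Qed.

End TruncatedMultinomial.

Section NeighbourhoodModel.
Variables (R : realType) (C D : nat).
Variables (q : 'I_C -> 'I_D.+1 -> R) (z : 'I_C -> 'I_C -> R).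
Hypothesis q_ge0 : forall s d, 0 <= q s d.
Hypothesis z_ge0 : forall s k, 0 <= z s k.

Lemma condP_ge0 (s : 'I_C) (n : {ffun 'I_C -> 'I_D.+1}) : 0 <= condP q z s n.
Proof.
by rewrite /condP !mulr_ge0 ?invr_ge0 ?ler0n ?prodr_ge0 // => k _; rewrite exprn_ge0.
Qed.

Lemma condP_sum1 (s : 'I_C) :
  \sum_(d < D.+1) q s d = 1 -> \sum_(k < C) z s k = 1 ->
  \sum_(n in @countvec C D) condP q z s n = 1.
Proof.
move=> q_sum1 z_sum1; rewrite /condP (@multinomial_sum R D C (q s) (z s)) z_sum1.
by under eq_bigr do rewrite expr1n mulr1.
Qed.

(* sqrt (P_s(n) P_r(n)) has again the multinomial shape of condP, with q_s, q_r
   replaced by sqrt (q_s q_r) and z_s, z_r by sqrt (z_s z_r). *)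
Lemma sqrt_condP (s r : 'I_C) (n : {ffun 'I_C -> 'I_D.+1}) :
  Num.sqrt (condP q z s n * condP q z r n)
  = Num.sqrt (q s (inord (degree n)) * q r (inord (degree n)))
    * ((degree n)`!)%:R / (\prod_(k < C) (n k)`!)%:R
    * \prod_(k < C) Num.sqrt (z s k * z r k) ^+ (n k).
Proof.
set a := q s _; set b := q r _.
pose m : R := ((degree n)`!)%:R / (\prod_(k < C) (n k)`!)%:R.
set Y := \prod_(k < C) Num.sqrt (z s k * z r k) ^+ (n k).
have m_ge0 : 0 <= m by rewrite /m divr_ge0 ?ler0n.
have Y_ge0 : 0 <= Y by apply: prodr_ge0 => k _; rewrite exprn_ge0 ?sqrtr_ge0.
have sqr_Y : Y ^+ 2 = (\prod_(k < C) z s k ^+ n k) * \prod_(k < C) z r k ^+ n k.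
  rewrite /Y -prodrXl -big_split /=; apply: eq_bigr => k _.
  by rewrite -exprM mulnC exprM sqr_sqrtr ?mulr_ge0 // exprMn.
have -> : condP q z s n * condP q z r n = (a * b) * (m * Y) ^+ 2.
  by rewrite /condP -/a -/b exprMn sqr_Y /m; ring.
rewrite sqrtrM ?mulr_ge0 ?q_ge0 // sqrtr_sqr ger0_norm ?mulr_ge0 //.
by rewrite /m !mulrA.
Qed.

Lemma bhattacharyya_condP (s r : 'I_C) :
  bhattacharyya (@countvec C D) (condP q z s) (condP q z r)
  = \sum_(d < D.+1) Num.sqrt (q s d * q r d)
      * (\sum_(k < C) Num.sqrt (z s k * z r k)) ^+ d.
Proof.
rewrite -(@multinomial_sum _ _ _ (fun d => Num.sqrt (q s d * q r d))).
by apply: eq_bigr => n _; rewrite sqrt_condP.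
Qed.

End NeighbourhoodModel.

Theorem theorem1 (R : realType) (C D : nat) (hC : (1 <= C)%N)
  (p : 'I_C -> R) (q : 'I_C -> 'I_D.+1 -> R) (c : 'I_C -> 'I_C -> R)
  (hp_pos : forall s, 0 < p s) (hp_sum : \sum_(s < C) p s = 1)
  (hq_nonneg : forall s d, 0 <= q s d) (hq_sum : forall s, \sum_(d < D.+1) q s d = 1)
  (hc_nonneg : forall s r, 0 <= c s r)
  (hc_pos : forall s, 0 < \sum_(k < C) p k * c s k) :
  NIC p q (zprob p c) <= MI p q (zprob p c).
Proof.
set z := zprob p c.
have z_ge0 s r : 0 <= z s r.
  exact: divr_ge0 (mulr_ge0 (ltW (hp_pos r)) (hc_nonneg s r)) (ltW (hc_pos s)).
have z_sum1 s : \sum_(k < C) z s k = 1 by rewrite -mulr_suml divff ?gt_eqF.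
rewrite /NIC /MI /entropyM /condEntropyM.
under eq_bigr => s _ do under eq_bigr => r _ do rewrite -bhattacharyya_condP //.
apply: mixture_information_ge => // s.
- exact: condP_ge0.
- exact: condP_sum1.
Qed.
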